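(* Let $q\ge2$, $n\ge1$, and let $U$ be a $q\times q$ row-stochastic matrix. Given an $L$-sized ID code with deterministic decoders $\{(Q_j,\mathcal{D}_j):j=1,\dots,L\}$ for the noisy permutation channel $\Sigma_{n,U}$ with Type-I and Type-II error probabilities $\lambda_1,\lambda_2$, there exists an $L$-sized ID code $\{(Q_i',P_i):i=1,\dots,L\}$ with stochastic decoders for the $q$-ary noisy composition channel $q$-NCC$_{n,U}$ having the same error probabilities $\lambda_{i\to j}$ for all $i\ne j$ and $\lambda_{i\not\to i}$ for all $i$ (in particular the same $\lambda_1,\lambda_2$). Moreover, if each $Q_i$ is a point mass (deterministic encoder), then each $Q_i'$ is also a point mass.
   Context: $\Sigma_{n,U}$: input $\mathbf{x}\in[1:q]^n$, permuted by a uniformly random permutation of $[1:n]$, then each coordinate passed independently through the DMC $U$; $P_\Sigma(\mathbf{y}|\mathbf{x})=\frac1{n!}\sum_\sigma\prod_iU(y_i|x_{\sigma^{-1}(i)})$. The composition of $\mathbf{x}$ is $(N(1|\mathbf{x}),\dots,N(q|\mathbf{x}))$ with $N(c|\mathbf{x})=|\{i:x_i=c\}|$; $\mathcal{N}_{q,n}$ is the set of compositions of vectors in $[1:q]^n$. $q$-NCC$_{n,U}$ has input and output alphabet $\mathcal{N}_{q,n}$ and $P_{q\text{-NC}}(\mathbf{w}|\mathbf{t})=\sum_{\mathbf{z}:\text{ composition } \mathbf{w}}\prod_iU(z_i|x_i)$ for any $\mathbf{x}$ of composition $\mathbf{t}$. ID codes for a channel $P$ from $\mathcal{A}$ to $\mathcal{B}$: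 pairs $(Q_i,P_i)$ with $Q_i$ a distribution on $\mathcal{A}$ and $P_i(1|y)\in[0,1]$, $P_i(0|y)=1-P_i(1|y)$ (deterministic decoders: $P_i(1|y)=\mathbb{1}\{y\in\mathcal{D}_i\}$). $\lambda_{i\to j}=\sum_{x,y}Q_i(x)P(y|x)P_j(1|y)$, $\lambda_{i\not\to i}=\sum_{x,y}Q_i(x)P(y|x)P_i(0|y)$, $\lambda_1=\max_i\lambda_{i\not\to i}$, $\lambda_2=\max_{i\ne j}\lambda_{i\to j}$. *)

From HB Require Import structures.
From mathcomp Require Import all_boot all_order all_algebra all_fingroup.
From mathcomp Require Import reals.
Set Implicit Arguments. Unset Strict Implicit. Unset Printing Implicit Defensive.
Import Order.TTheory GRing.Theory Num.Theory.
Local Open Scope ring_scope.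

(* A channel from A to B is a kernel W : A -> B -> R, W x y = P(y|x). *)

Definition is_distr (R : realType) (A : finType) (Q : A -> R) : Prop :=
  (forall a, 0 <= Q a) /\ \sum_(a : A) Q a = 1.

Definition point_mass (R : realType) (A : finType) (Q : A -> R) : Prop :=
  exists a0 : A, forall a, Q a = (a == a0)%:R.

(* stochastic decoder: P_i(1|y) in [0,1] *)
Definition is_decoder (R : realType) (B : finType) (P1 : B -> R) : Prop :=
  forall b, 0 <= P1 b <= 1.

Definition det_decoder (R : realType) (B : finType) (D : {set B}) : B -> R :=
  fun b => (b \in D)%:R.

Definition lam_to (R : realType) (A B : finType) (W : A -> B -> R)
  (Qi : A -> R) (Pj : B -> R) : R :=
  \sum_(a : A) \sum_(b : B) Qi a * W a b * Pj b.

Definition lam_not (R : realType) (A B : finType) (W : A -> B -> R)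
  (Qi : A -> R) (Pi : B -> R) : R :=
  \sum_(a : A) \sum_(b : B) Qi a * W a b * (1 - Pi b).

Definition row_stochastic (R : realType) (q : nat) (U : 'M[R]_q) : Prop :=
  (forall a b, 0 <= U a b) /\ (forall a, \sum_(b < q) U a b = 1).

(* vectors in [1:q]^n, letters indexed by 'I_q *)
Definition word (q n : nat) := {ffun 'I_n -> 'I_q}.

(* composition (N(1|x), ..., N(q|x)); each count is <= n *)
Definition compo (q n : nat) (x : word q n) : {ffun 'I_q -> 'I_n.+1} :=
  [ffun c => inord #|[set i | x i == c]|].

Definition comps (q n : nat) :=
  {t : {ffun 'I_q -> 'I_n.+1} | [exists x : word q n, compo x == t]}.

Definition PSigma (R : realType) (q n : nat) (U : 'M[R]_q)
  (x y : word q n) : R :=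
  (n`!%:R)^-1 * \sum_(s : 'S_n) \prod_(i < n) U (x ((s^-1)%g i)) (y i).

(* a fixed vector of composition t (any one; P_qNC does not depend on it) *)
Definition comp_rep (q n : nat) (t : comps q n) : word q n :=
  xchoose (existsP (valP t)).

Definition PqNC (R : realType) (q n : nat) (U : 'M[R]_q)
  (t w : comps q n) : R :=
  \sum_(z : word q n | compo z == val w)
     \prod_(i < n) U (comp_rep t i) (z i).

From HB Require Import structures.
From mathcomp Require Import all_boot all_order all_algebra all_fingroup.
From mathcomp Require Import reals.
Import Order.TTheory GRing.Theory Num.Theory.
Local Open Scope ring_scope.
Set Implicit Arguments. Unset Strict Implicit. Unset Printing Implicit Defensive.

(* Since P_Sigma(y|x) depends on y only through its composition, the output of
   Sigma_{n,U} can be replaced by its composition without loss: the composition of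
   the output is distributed as q-NCC_{n,U} on the composition of the input.  The
   new encoder is the image of Q_i under x |-> compo x, and the stochastic decoder
   P_j(w) is the fraction of the type class of w lying in D_j; averaging the
   deterministic decoder over each type class leaves every lambda unchanged.
   These are exact identities for an arbitrary kernel U. *)

Section Pushforward.
Variables (R : realType) (A A' B B' : finType).

Definition pushforward (f : A -> A') (Q : A -> R) : A' -> R :=
  fun a' => \sum_(a | f a == a') Q a.

Lemma pushforward_distr f Q : is_distr Q -> is_distr (pushforward f Q).
Proof.
case=> Q_ge0 Q_sum1; split=> [a'|]; first exact: sumr_ge0.
by rewrite -Q_sum1 [RHS](partition_big f xpredT).
Qed.

Lemma pushforward_point_mass f Q : point_mass Q -> point_mass (pushforward f Q).
Proof.
case=> a0 Q_a0; exists (f a0) => a'; rewrite /pushforward.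
rewrite big_mkcond (eq_bigr (fun a => if a == a0 then (f a == a')%:R else 0)).
  by rewrite -big_mkcond big_pred1_eq eq_sym.
by move=> a _; rewrite Q_a0; case: (eqVneq a a0) => [->|_]; case: ifP.
Qed.

Lemma lam_to_pushforward (W : A -> B -> R) (W' : A' -> B' -> R) f Q g h :
    (forall a, \sum_b' W' (f a) b' * h b' = \sum_b W a b * g b) ->
  lam_to W' (pushforward f Q) h = lam_to W Q g.
Proof.
move=> W'_sim; rewrite /lam_to [RHS](partition_big f xpredT) //=.
apply: eq_bigr => a' _; under eq_bigr => b' _ do rewrite -mulrA.
rewrite -mulr_sumr mulr_suml; apply: eq_bigr => a /eqP <-.
by rewrite W'_sim mulr_sumr; apply: eq_bigr => b _; rewrite mulrA.
Qed.

End Pushforward.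

Lemma lam_notE (R : realType) (A B : finType) (W : A -> B -> R) Q P :
  lam_not W Q P = lam_to W Q (fun b => 1 - P b).
Proof. by []. Qed.

Section SetAverage.
Variables (R : realType) (T : finType).
Implicit Types (S : {set T}) (g : T -> R).

Definition set_avg (S : {set T}) (g : T -> R) : R := (\sum_(y in S) g y) / #|S|%:R.

Lemma set_avg_ge0_le1 S g : (forall y, 0 <= g y <= 1) -> 0 <= set_avg S g <= 1.
Proof.
move=> g01; rewrite /set_avg; have [->|S_gt0] := posnP #|S|.
  by rewrite invr0 mulr0 lexx ler01.
have S_pos : 0 < #|S|%:R :> R by rewrite ltr0n.
rewrite divr_ge0 ?ler0n ?sumr_ge0 //=; last by move=> y _; case/andP: (g01 y).
rewrite ler_pdivrMr // mul1r -sumr_const; apply: ler_sum => y _.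
by case/andP: (g01 y).
Qed.

Lemma set_avg_compl S g : (0 < #|S|)%N ->
  set_avg S (fun y => 1 - g y) = 1 - set_avg S g.
Proof.
move=> S_gt0; have S_neq0 : #|S|%:R != 0 :> R by rewrite pnatr_eq0 -lt0n.
by rewrite /set_avg sumrB sumr_const mulrBl -mulr_natl mulr1 mulfV.
Qed.

Lemma sum_mul_set_avg S (F : T -> R) g : {in S &, forall y y', F y = F y'} ->
  \sum_(y in S) F y * g y = (\sum_(y in S) F y) * set_avg S g.
Proof.
move=> F_const; have [->|[y0 y0S]] := set_0Vmem S; first by rewrite !big_set0 mul0r.
have S_neq0 : #|S|%:R != 0 :> R by rewrite pnatr_eq0 -lt0n; apply/card_gt0P; exists y0.
have -> : \sum_(y in S) F y * g y = F y0 * \sum_(y in S) g y.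
  by rewrite mulr_sumr; apply: eq_bigr => y yS; rewrite (F_const y y0).
have -> : \sum_(y in S) F y = F y0 *+ #|S|.
  by rewrite -sumr_const; apply: eq_bigr => y yS; apply: F_const.
by rewrite /set_avg -[F y0 *+ _]mulr_natr -mulrA [_%:R * _]mulrCA mulfV ?mulr1.
Qed.

End SetAverage.

Section Compositions.
Variables q n : nat.
Implicit Types (x y z : word q n) (t w : comps q n).

Definition word_perm z (p : 'S_n) : word q n := [ffun i => z (p i)].

Lemma word_perm_inj (p : 'S_n) : injective (word_perm ^~ p).
Proof.
move=> z1 z2 /ffunP eq_z; apply/ffunP => i.
by have := eq_z (p^-1 i)%g; rewrite !ffunE permKV.
Qed.

Lemma compo_word_perm z p : compo (word_perm z p) = compo z.
Proof.
apply/ffunP => c; rewrite !ffunE; congr inord.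
have -> : [set i | word_perm z p i == c] = p @^-1: [set i | z i == c].
  by apply/setP => i; rewrite !inE ffunE.
exact/card_preimset/perm_inj.
Qed.

Lemma card_letter_compo x y c : compo x = compo y ->
  #|[set i | x i == c]| = #|[set i | y i == c]|.
Proof.
have card_lt z : (#|[set i | z i == c]| < n.+1)%N.
  by rewrite ltnS (leq_trans (max_card _)) ?card_ord.
by move=> /ffunP/(_ c); rewrite !ffunE => /(congr1 val); rewrite /= !inordK.
Qed.

Lemma count_mem_word x c :
  count_mem c [seq x i | i <- enum 'I_n] = #|[set i | x i == c]|.
Proof. by rewrite count_map cardsE cardE -size_filter enumT. Qed.

Lemma compo_eq_perm x y : compo x = compo y -> exists p : 'S_n, x = word_perm y p.
Proof.
move=> eq_xy.
have : perm_eq [tuple x i | i < n] [tuple y i | i < n].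
  by apply/allP => c _; rewrite /= !count_mem_word (card_letter_compo c eq_xy).
case/tuple_permP => p /val_inj eq_p; exists p; apply/ffunP => i.
by have := congr1 (fun t : n.-tuple 'I_q => tnth t i) eq_p; rewrite !tnth_mktuple ffunE.
Qed.

Definition comp_of x : comps q n :=
  exist _ (compo x) (introT existsP (ex_intro _ x (eqxx (compo x)))).

Lemma comp_of_eq x t : (comp_of x == t) = (compo x == val t).
Proof. by rewrite -val_eqE. Qed.

Definition type_class w : {set word q n} := [set y | compo y == val w].

Lemma compo_comp_rep t : compo (comp_rep t) = val t.
Proof. exact/eqP/(xchooseP (existsP (valP t))). Qed.

Lemma type_class_gt0 w : (0 < #|type_class w|)%N.
Proof. by apply/card_gt0P; exists (comp_rep w); rewrite inE compo_comp_rep. Qed.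

End Compositions.

Section PermutationChannel.
Variables (R : realType) (q n : nat) (U : 'M[R]_q).
Implicit Types x y z : word q n.

Lemma sum_compo_word_perm (F : word q n -> R) w p :
  \sum_(z | compo z == w) F (word_perm z p) = \sum_(z | compo z == w) F z.
Proof.
rewrite [RHS](reindex_inj (@word_perm_inj _ _ p)) /=.
by apply: eq_bigl => z; rewrite compo_word_perm.
Qed.

Lemma PSigma_compo x y y' : compo y = compo y' -> PSigma U x y = PSigma U x y'.
Proof.
move=> /esym/compo_eq_perm [p ->]; rewrite /PSigma; congr (_ * _).
under [RHS]eq_bigr => s _.
  rewrite (reindex_inj (@perm_inj _ p^-1%g)) /=.
  under eq_bigr => i _ do rewrite ffunE permKV -permM -invMg.
over.
by rewrite [LHS](reindex_inj (mulIg p)).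
Qed.

Lemma sum_compo_PSigma x w :
  \sum_(y | compo y == w) PSigma U x y =
  \sum_(z | compo z == w) \prod_(i < n) U (x i) (z i).
Proof.
rewrite /PSigma -mulr_sumr exchange_big /=.
under eq_bigr => s _.
  rewrite -(sum_compo_word_perm _ _ s^-1%g).
  under eq_bigr => y _.
    rewrite (reindex_inj (@perm_inj _ s)) /=.
    under eq_bigr => i _ do rewrite ffunE !permK.
  over.
over.
rewrite /= sumr_const card_Sn mulrnAr -mulr_natl mulrA mulfV ?mul1r //.
by rewrite pnatr_eq0 -lt0n fact_gt0.
Qed.

Lemma PqNC_comp_of x w : PqNC U (comp_of x) w = \sum_(y in type_class w) PSigma U x y.
Proof.
rewrite /PqNC; have [p ->] := compo_eq_perm (compo_comp_rep (comp_of x)).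
rewrite -(sum_compo_word_perm _ _ p).
rewrite [RHS](eq_bigl (fun y => compo y == val w)) => [|y]; last by rewrite inE.
rewrite sum_compo_PSigma; apply: eq_bigr => z _.
by rewrite [RHS](reindex_inj (@perm_inj _ p)); apply: eq_bigr => i _; rewrite !ffunE.
Qed.

Lemma sum_PqNC_set_avg x (g : word q n -> R) :
  \sum_w PqNC U (comp_of x) w * set_avg (type_class w) g = \sum_y PSigma U x y * g y.
Proof.
rewrite [RHS](partition_big (@comp_of q n) xpredT) //=; apply: eq_bigr => w _.
rewrite PqNC_comp_of -sum_mul_set_avg => [|y y']; last first.
  by rewrite !inE => /eqP y_w /eqP y'_w; apply: PSigma_compo; rewrite y_w y'_w.
by apply: eq_bigl => y; rewrite comp_of_eq inE.
Qed.

End PermutationChannel.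

Theorem lemma2 (R : realType) (q n : nat) (hq : (2 <= q)%N) (hn : (1 <= n)%N)
  (U : 'M[R]_q) (hU : row_stochastic U) (L : nat)
  (Q : 'I_L -> word q n -> R) (D : 'I_L -> {set word q n})
  (hQ : forall i, is_distr (Q i)) :
  exists (Q' : 'I_L -> comps q n -> R) (P : 'I_L -> comps q n -> R),
    (forall i, is_distr (Q' i)) /\ (forall i, is_decoder (P i)) /\
    (forall i j, i != j ->
       lam_to (PqNC U) (Q' i) (P j) = lam_to (PSigma U) (Q i) (det_decoder R (D j))) /\
    (forall i,
       lam_not (PqNC U) (Q' i) (P i) = lam_not (PSigma U) (Q i) (det_decoder R (D i))) /\
    ((forall i, point_mass (Q i)) -> forall i, point_mass (Q' i)).
Proof.
pose P j w := set_avg (type_class w) (det_decoder R (D j)).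
exists (fun i => pushforward (@comp_of q n) (Q i)), P.
split; first by move=> i; apply: pushforward_distr.
split.
  move=> j w; apply: set_avg_ge0_le1 => y.
  by rewrite /det_decoder ler0n lern1 leq_b1.
split.
  by move=> i j _; apply: lam_to_pushforward => x; apply: sum_PqNC_set_avg.
split; last by move=> Q_point i; apply: pushforward_point_mass.
move=> i; rewrite !lam_notE; apply: lam_to_pushforward => x.
rewrite -sum_PqNC_set_avg; apply: eq_bigr => w _.
by rewrite set_avg_compl ?type_class_gt0.
Qed.
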